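(* Let $(M,d)$ be a bounded metric space and let $\mathcal S$ be a group acting on $M$ such that each $s\in\mathcal S$ is an orbit-nonexpansive self-mapping of $M$. Then $\mathcal S$ is a family of interlaced orbit-nonexpansive mappings, i.e. $d(tx,sy)\le \sup\{D(x,o_r(y)): r\in\mathcal S\}$ for all $s,t\in\mathcal S$ and $x,y\in M$.
   Context: For a metric space $(M,d)$, a mapping $T:M\to M$ and $x\in M$, the orbit of $x$ is $o_T(x)=\{x\}\cup\{T^nx:n\in\mathbb N\}$. For $x\in M$ and bounded $A\subseteq M$, $D(x,A)=\sup\{d(x,a):a\in A\}$. A mapping $T:M\to M$ is orbit-nonexpansive if $d(Tx,Ty)\le D(x,o_T(y))$ for all $x,y\in M$. A group $\mathcal S$ acts on $M$ if each $s\in\mathcal S$ defines a map $M\to M$, the identity element acts as the identity map, and $(s\cdot t)(x)=s(t(x))$ for all $s,t\in\mathcal S$, $x\in M$. A family $\mathcal F$ of self-mappings of a bounded metric space $M$ is a family of interlaced orbit-nonexpansive mappings if $d(Tx,Sy)\le\sup\{D(x,o_R(y)):R\in\mathcal F\}$ for all $T,S\in\mathcal F$ and $x,y\in M$. *)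

From Stdlib Require Import Reals.
From Coquelicot Require Import Coquelicot.
Open Scope R_scope.

Definition is_metric {M : Type} (d : M -> M -> R) : Prop :=
  (forall x y, 0 <= d x y) /\
  (forall x y, d x y = 0 <-> x = y) /\
  (forall x y, d x y = d y x) /\
  (forall x y z, d x z <= d x y + d y z).

Definition bounded_metric {M : Type} (d : M -> M -> R) : Prop :=
  exists B : R, forall x y, d x y <= B.

Definition orbit {M : Type} (T : M -> M) (x : M) : M -> Prop :=
  fun z => exists n : nat, z = Nat.iter n T x.

(* D(x,A) = sup { d(x,a) : a ∈ A } (finite for bounded nonempty A). *)
Definition Dsup {M : Type} (d : M -> M -> R) (x : M) (A : M -> Prop) : R :=
  real (Lub_Rbar (fun r => exists a, A a /\ r = d x a)).

Definition orbit_nonexpansive {M : Type} (d : M -> M -> R) (T : M -> M) : Prop :=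
  forall x y, d (T x) (T y) <= Dsup d x (orbit T y).

Definition is_group {G : Type} (mul : G -> G -> G) (e : G) (inv : G -> G) : Prop :=
  (forall a b c, mul a (mul b c) = mul (mul a b) c) /\
  (forall a, mul e a = a /\ mul a e = a) /\
  (forall a, mul (inv a) a = e /\ mul a (inv a) = e).

Definition is_action {G M : Type} (mul : G -> G -> G) (e : G) (act : G -> M -> M) : Prop :=
  (forall x, act e x = x) /\
  (forall s t x, act (mul s t) x = act s (act t x)).

Definition interlaced_orbit_nonexpansive {I M : Type} (d : M -> M -> R) (F : I -> M -> M) : Prop :=
  forall (t s : I) (x y : M),
    d (F t x) (F s y) <=
      real (Lub_Rbar (fun r => exists i : I, r = Dsup d x (orbit (F i) y))).

(** Write [s y = t z] with [z = (t^-1 s) y].  Orbit-nonexpansiveness of [t]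
    bounds [d(t x, s y)] by [D(x, o_t(z))], and every point [t^n z] of that
    orbit is [r y] for the group element [r = t^n t^-1 s]; as [r y] lies on
    [o_r(y)], its distance to [x] is at most [D(x, o_r(y))]. *)

From Stdlib Require Import Reals.
From Coquelicot Require Import Coquelicot.
Open Scope R_scope.

Section BoundedLub.

Variables (E : R -> Prop) (B : R).
Hypothesis E_le : forall r, E r -> r <= B.

(* Without a point in [E] the supremum is [-oo] and [real] returns [0]. *)
Lemma real_Lub_Rbar_bounds (r : R) :
  E r -> r <= real (Lub_Rbar E) /\ real (Lub_Rbar E) <= B.
Proof.
  intros Er.
  destruct (Lub_Rbar_correct E) as [ub lub].
  assert (r_le : Rbar_le r (Lub_Rbar E)) by (apply ub; exact Er).
  assert (le_B : Rbar_le (Lub_Rbar E) B) by (apply lub; exact E_le).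
  destruct (Lub_Rbar E); simpl in *; tauto.
Qed.

End BoundedLub.

Section BoundedDsup.

Variables (M : Type) (d : M -> M -> R) (B : R).
Hypothesis d_le : forall x y, d x y <= B.

Lemma Dsup_ge (x : M) (A : M -> Prop) (a : M) : A a -> d x a <= Dsup d x A.
Proof.
  intros Aa. apply (real_Lub_Rbar_bounds _ B).
  - intros r [b [_ ->]]. apply d_le.
  - exists a; split; [exact Aa | reflexivity].
Qed.

Lemma Dsup_le (x : M) (A : M -> Prop) (a : M) : A a -> Dsup d x A <= B.
Proof.
  intros Aa. apply (real_Lub_Rbar_bounds _ B) with (r := d x a).
  - intros r [b [_ ->]]. apply d_le.
  - exists a; split; [exact Aa | reflexivity].
Qed.

End BoundedDsup.

Lemma orbit_self {M : Type} (T : M -> M) (x : M) : orbit T x x.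
Proof. exists 0%nat; reflexivity. Qed.

Lemma orbit_image {M : Type} (T : M -> M) (x : M) : orbit T x (T x).
Proof. exists 1%nat; reflexivity. Qed.

Section GroupAction.

Variables (G M : Type) (mul : G -> G -> G) (e : G) (inv : G -> G)
  (act : G -> M -> M).
Hypothesis action : is_action mul e act.

Lemma iter_act (t r : G) (y : M) (n : nat) :
  Nat.iter n (act t) (act r y) = act (Nat.iter n (mul t) r) y.
Proof.
  destruct action as [_ act_mul].
  induction n as [|n IH]; simpl; [reflexivity|].
  rewrite IH, act_mul; reflexivity.
Qed.

Lemma orbit_act (t r : G) (y z : M) :
  orbit (act t) (act r y) z -> exists r' : G, z = act r' y.
Proof.
  intros [n ->]. exists (Nat.iter n (mul t) r). apply iter_act.
Qed.

Hypothesis group : is_group mul e inv.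

Lemma act_mul_inv (t s : G) (y : M) : act t (act (mul (inv t) s) y) = act s y.
Proof.
  destruct action as [_ act_mul], group as [mulA [mul1 mulV]].
  rewrite <- act_mul, mulA.
  destruct (mulV t) as [_ ->]. destruct (mul1 s) as [-> _]. reflexivity.
Qed.

End GroupAction.

Theorem proposition3p2 (M G : Type) (d : M -> M -> R)
  (mul : G -> G -> G) (e : G) (inv : G -> G) (act : G -> M -> M) :
  is_metric d -> bounded_metric d ->
  is_group mul e inv -> is_action mul e act ->
  (forall s : G, orbit_nonexpansive d (act s)) ->
  interlaced_orbit_nonexpansive d act.
Proof.
  intros _ [B d_le] group action nonexp t s x y.
  set (S := fun r => exists i : G, r = Dsup d x (orbit (act i) y)).
  assert (S_le : forall r, S r -> r <= B).
  { intros r [i ->]. exact (Dsup_le M d B d_le x _ y (orbit_self _ y)). }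
  assert (act_le : forall r : G, d x (act r y) <= real (Lub_Rbar S)).
  { intros r. apply Rle_trans with (Dsup d x (orbit (act r) y)).
    - apply (Dsup_ge M d B d_le), orbit_image.
    - apply (real_Lub_Rbar_bounds S B S_le). exists r; reflexivity. }
  set (z := act (mul (inv t) s) y).
  rewrite <- (act_mul_inv G M mul e inv act action group t s y).
  apply Rle_trans with (Dsup d x (orbit (act t) z)); [apply nonexp|].
  apply (real_Lub_Rbar_bounds _ (real (Lub_Rbar S))) with (r := d x z).
  - intros r [a [orbit_a ->]].
    destruct (orbit_act G M mul e act action t _ y a orbit_a) as [r ->].
    apply act_le.
  - exists z; split; [apply orbit_self | reflexivity].
Qed.
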